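(* If $X$ is a set star Hurewicz space and $Y$ is a compact space, then $X \times Y$ is nearly set star Hurewicz.
   Context: For a subset $A$ of a space $X$ and a collection $\mathcal{U}$ of subsets of $X$, ${\rm St}(A,\mathcal{U}) = \bigcup\{U \in \mathcal{U}: U \cap A \neq \emptyset\}$. A space $X$ is set star Hurewicz if for each nonempty $A \subset X$ and each sequence $(\mathcal{U}_n: n\in\mathbb{N})$ of collections of sets open in $X$ with $\overline{A} \subset \bigcup\mathcal{U}_n$ for all $n$, there are finite $\mathcal{V}_n \subset \mathcal{U}_n$ such that each $x \in A$ lies in ${\rm St}(\bigcup\mathcal{V}_n,\mathcal{U}_n)$ for all but finitely many $n$. A space $Z$ is nearly set star Hurewicz if for each nonempty $A \subset Z$ and each sequence $(\mathcal{U}_n: n\in\mathbb{N})$ of open covers of $Z$ there are finite $\mathcal{V}_n \subset \mathcal{U}_n$ such that each $z \in A$ lies in ${\rm St}(\bigcup\mathcal{V}_n,\mathcal{U}_n)$ for all but finitely many $n$. *)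

From HB Require Import structures.
From mathcomp Require Import all_boot all_order all_algebra.
From mathcomp Require Import all_classical all_reals topology.
Set Implicit Arguments. Unset Strict Implicit. Unset Printing Implicit Defensive.
Local Open Scope classical_set_scope.

Definition St {T : Type} (A : set T) (U : set (set T)) : set T :=
  \bigcup_(V in [set V | U V /\ V `&` A !=set0]) V.

Definition set_star_Hurewicz (X : topologicalType) : Prop :=
  forall (A : set X), A !=set0 ->
  forall (U : nat -> set (set X)),
    (forall n V, U n V -> open V) ->
    (forall n, closure A `<=` \bigcup_(V in U n) V) ->
    exists Vs : nat -> set (set X),
      (forall n, finite_set (Vs n) /\ Vs n `<=` U n) /\
      (forall x, A x -> exists N : nat, forall n : nat, (N <= n)%N ->
          St (\bigcup_(V in Vs n) V) (U n) x).

Definition nearly_set_star_Hurewicz (Z : topologicalType) : Prop :=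
  forall (A : set Z), A !=set0 ->
  forall (U : nat -> set (set Z)),
    (forall n V, U n V -> open V) ->
    (forall n, \bigcup_(V in U n) V = setT) ->
    exists Vs : nat -> set (set Z),
      (forall n, finite_set (Vs n) /\ Vs n `<=` U n) /\
      (forall z, A z -> exists N : nat, forall n : nat, (N <= n)%N ->
          St (\bigcup_(V in Vs n) V) (U n) z).

From HB Require Import structures.
From mathcomp Require Import all_boot all_order all_algebra.
From mathcomp Require Import all_classical all_reals topology.
From mathcomp Require Import finmap.
Local Open Scope classical_set_scope.

(* The proof rests on a tube lemma for open covers of X * Y.  Given an open
   cover U of X * Y and a point x of X, compactness of the fibre {x} * Y gives
   a finite subfamily D of U covering it, each member meeting it; by the tube
   lemma there is an open neighbourhood W of x such that D still covers every
   fibre over W and every member of D still meets every fibre over W (we say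
   that D traps the fibres over W).  Choosing such a tube (D n x, W n x) for
   every cover U n and point x, the sets W n x form open covers of X, and the
   set star Hurewicz property of X, applied to the projection of A, selects
   finitely many W n x for each n; the corresponding finite families D n x
   are the required subfamilies of U n.  The star condition transfers because
   two overlapping neighbourhoods link their traps through a common fibre
   (lemma trap_star). *)

(* Compactness in the filter sense yields finite subcovers; the library
   states this only for pointed spaces, the empty case being trivial. *)
Lemma compact_cover_compact {T : topologicalType} {A : set T} :
  compact A -> cover_compact A.
Proof.
move=> cA; have [[a _]|A0] := pselect (A !=set0).
  pose Tp : ptopologicalType := HB.pack (Topological.sort T) (isPointed.Build T a).
  by have : compact (A : set Tp) by []; rewrite compact_cover.
move=> I D f _ _; exists fset0 => // x Ax; exfalso; exact: A0 (ex_intro _ x Ax).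
Qed.

Section Tubes.
Set Implicit Arguments.
Unset Strict Implicit.
Variables X Y : topologicalType.
Implicit Types (U : set (set (X * Y))) (D : {fset set (X * Y)}).

Lemma open_rectangle (V : set (X * Y)) (x : X) (y : Y) : open V -> V (x, y) ->
  exists2 P, nbhs x P & exists2 Q, nbhs y Q &
    forall x' y', P x' -> Q y' -> V (x', y').
Proof.
move=> oV Vxy; have : nbhs (x, y) V by exact: open_nbhs_nbhs.
case=> [[P Q]] /= [nP nQ] PQV; exists P => //; exists Q => // x' y' Px' Qy'.
exact: (PQV (x', y')).
Qed.

Definition fiber_trap D (W : set X) : Prop :=
  forall x', W x' ->
    (forall y, exists2 V, V \in D & V (x', y)) /\
    (forall V, V \in D -> exists y, V (x', y)).

Definition tube U D (W : set X) (x : X) : Prop :=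
  [/\ forall V, V \in D -> U V, open W, W x & fiber_trap D W].

Lemma near_fiber_meets D (x : X) : (forall V, V \in D -> open V) ->
  (forall V, V \in D -> exists y, V (x, y)) ->
  \forall x' \near x, forall V, V \in D -> exists y, V (x', y).
Proof.
move=> oD meetD.
suff : nbhs x (\bigcap_(V in [set` D]) [set x' | exists y, V (x', y)]).
  by apply: filterS => x' Dx' V VD; exact: Dx' V VD.
apply: filter_bigI => V VD; have [y Vxy] := meetD V VD.
have [P nP [Q nQ PQV]] := open_rectangle (oD V VD) Vxy.
by apply: filterS nP => x' Px'; exists y; exact: PQV (nbhs_singleton nQ).
Qed.

Hypothesis cY : compact [set: Y].

Lemma near_fiber_covered D (x : X) : (forall V, V \in D -> open V) ->
  (forall y, exists2 V, V \in D & V (x, y)) ->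
  \forall x' \near x, forall y, exists2 V, V \in D & V (x', y).
Proof.
move=> oD covD.
have : \forall x' \near x,
    [set: Y] `<=` (fun y => exists2 V, V \in D & V (x', y)).
  apply: (proj1 (compact_near_coveringP _) cY X (nbhs x)) => y _.
  have [V VD Vxy] := covD y.
  have [P nP [Q nQ PQV]] := open_rectangle (oD V VD) Vxy.
  exists (Q, P) => // -[y' x'] [/= Qy' Px']; exists V => //; exact: PQV.
by apply: filterS => x' covx' y; exact: covx' y I.
Qed.

Lemma fiber_subcover U (x : X) : (forall V, U V -> open V) ->
  \bigcup_(V in U) V = setT ->
  exists2 D, (forall V, V \in D -> U V) & fiber_trap D [set x].
Proof.
move=> oU covU.
pose E := [set V | U V /\ exists y, V (x, y)].
pose slice (V : set (X * Y)) := [set y | V (x, y)].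
have oslice V : E V -> open (slice V).
  case=> UV _; rewrite openE => y Vxy.
  have [P nP [Q nQ PQV]] := open_rectangle (oU V UV) Vxy.
  by apply: filterS nQ => y' Qy'; exact: PQV (nbhs_singleton nP) Qy'.
have covE : [set: Y] `<=` cover E slice.
  move=> y _; have : (\bigcup_(V in U) V) (x, y) by rewrite covU.
  by case=> V UV Vxy; exists V => //; split => //; exists y.
have [D DE covD] := compact_cover_compact cY _ E slice oslice covE.
have {}DE V : V \in D -> E V by move=> /DE /set_mem.
exists D; first by move=> V /DE [].
move=> _ ->; split=> [y|V /DE [] //].
by have [V VD Vxy] := covD y I; exists V.
Qed.

(* Every point has a tube: the trap over the single fibre spreads to an open
   neighbourhood. *)
Lemma tube_exists U (x : X) : (forall V, U V -> open V) ->
  \bigcup_(V in U) V = setT -> exists DW, tube U DW.1 DW.2 x.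
Proof.
move=> oU covU; have [D DU trapx] := fiber_subcover x oU covU.
have [covx meetx] := trapx x erefl.
have oD V : V \in D -> open V by move=> /DU; exact: oU.
have : nbhs x ((fun x' => forall y, exists2 V, V \in D & V (x', y)) `&`
                (fun x' => forall V, V \in D -> exists y, V (x', y))).
  by apply: filterI; [exact: near_fiber_covered | exact: near_fiber_meets].
rewrite nbhsE => -[W [oW Wx] WD].
by exists (D, W); split => // x' /WD.
Qed.

(* Two traps whose neighbourhoods overlap at [x2] link up through the fibre
   over [x2]: any point over the first neighbourhood lies in a member of the
   first family meeting some member of the second one. *)
Lemma trap_star U D1 D2 (W1 W2 : set X) (z x2 : X) (y : Y) :
  (forall V, V \in D1 -> U V) -> fiber_trap D1 W1 -> fiber_trap D2 W2 ->
  W1 z -> W1 x2 -> W2 x2 -> St (\bigcup_(V in [set` D2]) V) U (z, y).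
Proof.
move=> D1U trap1 trap2 W1z W1x2 W2x2.
have [V1 V1D1 V1zy] := (trap1 z W1z).1 y.
have [y2 V1x2] := (trap1 x2 W1x2).2 V1 V1D1.
have [V2 V2D2 V2x2] := (trap2 x2 W2x2).1 y2.
exists V1 => //; split; first exact: D1U.
by exists (x2, y2); split => //; exists V2.
Qed.

End Tubes.

Lemma St_subset {T : Type} {A B : set T} {U : set (set T)} :
  A `<=` B -> St A U `<=` St B U.
Proof.
move=> AB z [V [UV [a [Va Aa]]] Vz]; exists V => //; split => //.
by exists a; split => //; exact: AB.
Qed.

Theorem corollary3p16 (X Y : topologicalType) :
  set_star_Hurewicz X -> compact [set: Y] ->
  nearly_set_star_Hurewicz (X * Y)%type.
Proof.
move=> ssH cY A [[a0 b0] Aab] U oU covU.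
have /choice[DW tubeDW] : forall nx : nat * X,
    exists DW, tube (U nx.1) DW.1 DW.2 nx.2.
  by move=> [n x]; exact (tube_exists cY x (oU n) (covU n)).
pose D n x := (DW (n, x)).1; pose W n x := (DW (n, x)).2.
(* [pt n V] is a centre x with W n x = V, whenever V is of this form. *)
pose pt n := 'pinv_(fun=> a0) [set: X] (W n).
have nonempty_proj : fst @` A !=set0 by exists a0, (a0, b0).
have oW n V : range (W n) V -> open V.
  by case=> x _ <-; have [] := tubeDW (n, x).
have covW n : closure (fst @` A) `<=` \bigcup_(V in range (W n)) V.
  by move=> x _; exists (W n x); [exists x | have [] := tubeDW (n, x)].
have [Vs [finVs starVs]] := ssH _ nonempty_proj _ oW covW.
exists (fun n => \bigcup_(V in Vs n) [set` D n (pt n V)]); split => [n|].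
  split; first by apply: bigcup_finite => [|V _]; [exact: (finVs n).1|].
  move=> V' [V _ /=]; have [DU _ _ _] := tubeDW (n, pt n V); exact: DU.
move=> [z y] Azy; have [N starN] := starVs z (ex_intro2 _ _ _ Azy erefl).
exists N => n /starN [_ [[x1 _ <-] [x2 [W1x2 [V1 V1Vs V1x2]]]] W1z].
have ptV1 : W n (pt n V1) = V1.
  by apply: pinvK; apply/mem_set; exact: (finVs n).2.
have [D1U _ _ trap1] := tubeDW (n, x1); have [_ _ _ trap2] := tubeDW (n, pt n V1).
have W2x2 : W n (pt n V1) x2 by rewrite ptV1.
apply: St_subset (trap_star y D1U trap1 trap2 W1z W1x2 W2x2) => p [V VD2 Vp].
by exists V; first exists V1.
Qed.
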